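(* Let $\alpha$ be a nonzero real number and let $\gamma(t)=\Psi(u(t),v(t))$ be a regular curve in $\mathbb H^2$ not passing through $N$. Then $\gamma$ is an $\alpha$-stationary curve if and only if $$\kappa=\alpha\,\frac{\langle \mathbf n,\xi\rangle_\epsilon}{\mathsf d}$$ along $\gamma$. Here $\mathbf n$ is the unit normal of $\gamma$, $\mathsf d$ is the hyperbolic distance from $\gamma(t)$ to $N$, and $\xi$ is the unit tangent vector at $\gamma(t)$ of the ray from $N$ through $\gamma(t)$.
   Context: Let $\langle x,y\rangle_\epsilon=x_1y_1+x_2y_2-x_3y_3$ be the Lorentzian inner product on $\mathbb R^3$ and $|x|_\epsilon=\sqrt{|\langle x,x\rangle_\epsilon|}$. The hyperbolic plane is $\mathbb H^2=\{(x,y,z):x^2+y^2-z^2=-1,\ z>0\}$ with the induced metric. It is parametrized by $\Psi(u,v)=(\sinh u\cos v,\sinh u\sin v,\cosh u)$. Let $N=(0,0,1)$. The hyperbolic distance from $\Psi(u,v)$ ($u\ge0$) to $N$ is $u$. Rays from $N$ are the geodesics $u\mapsto\Psi(u,v_0)$, $u>0$. For $p=\Psi(u,v)\neq N$, set $\xi(p)=\Psi_u(u,v)=(\cosh u\cos v,\cosh u\sin v,\sinh u)$; this is the unit tangent of the ray through $p$, pointing away from $N$. For a regular curve $\gamma(t)=\Psi(u(t),v(t))$ with $u>0$, we have $|\gamma'|_\epsilon=\sqrt{u'^2+\sinh^2(u)v'^2}$. Its unit normal is $$\mathbf n=\frac{1}{|\gamma'|_\epsilon}\big(u'\sin v+\sinh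 u\cosh u\,v'\cos v,\ \sinh u\cosh u\,v'\sin v-u'\cos v,\ \sinh^2(u)\,v'\big).$$ Its curvature is $\kappa=\langle\gamma'',\mathbf n\rangle_\epsilon/|\gamma'|_\epsilon^2$. The energy of $\gamma$ is $$E_\alpha[\gamma]=\int_\gamma\mathsf d^\alpha\,ds=\int u^\alpha\sqrt{u'^2+\sinh^2(u)v'^2}\,dt.$$ An $\alpha$-stationary curve is a critical point of $E_\alpha$, i.e. $(u,v)$ satisfies its Euler–Lagrange equations. Throughout the paper, $\alpha\ne0$ and curves avoid $N$. *)

From Stdlib Require Import Reals.
From Coquelicot Require Import Coquelicot.
Open Scope R_scope.

Definition R3 := (R * R * R)%type.
Definition c1 (x : R3) : R := fst (fst x).
Definition c2 (x : R3) : R := snd (fst x).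
Definition c3 (x : R3) : R := snd x.

Definition linner (x y : R3) : R := c1 x * c1 y + c2 x * c2 y - c3 x * c3 y.

Definition Psi (u v : R) : R3 := (sinh u * cos v, sinh u * sin v, cosh u).

Definition gamma (u v : R -> R) (t : R) : R3 := Psi (u t) (v t).

Definition vderive (f : R -> R3) (t : R) : R3 :=
  (Derive (fun s => c1 (f s)) t, Derive (fun s => c2 (f s)) t,
   Derive (fun s => c3 (f s)) t).

(* |gamma'|_eps = sqrt(u'^2 + sinh^2(u) v'^2) *)
Definition speed (u v : R -> R) (t : R) : R :=
  sqrt ((Derive u t) ^ 2 + (sinh (u t)) ^ 2 * (Derive v t) ^ 2).

Definition normal (u v : R -> R) (t : R) : R3 :=
  let u0 := u t in let v0 := v t in
  let du := Derive u t in let dv := Derive v t in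
  let s := speed u v t in
  ((du * sin v0 + sinh u0 * cosh u0 * dv * cos v0) / s,
   (sinh u0 * cosh u0 * dv * sin v0 - du * cos v0) / s,
   ((sinh u0) ^ 2 * dv) / s).

Definition curvature (u v : R -> R) (t : R) : R :=
  linner (vderive (vderive (gamma u v)) t) (normal u v t) / (speed u v t) ^ 2.

(* xi(p) = Psi_u(u,v): unit tangent of the ray from N through p = Psi(u,v) *)
Definition xi (u v : R) : R3 := (cosh u * cos v, cosh u * sin v, sinh u).

(* hyperbolic distance from Psi(u,v) (u >= 0) to N = (0,0,1); equals u *)
Definition distN (u v : R) : R := u.

Definition Lag (alpha : R) (x y p q : R) : R :=
  Rpower x alpha * sqrt (p ^ 2 + (sinh x) ^ 2 * q ^ 2).

Definition in_open_int (a b : Rbar) (t : R) : Prop := Rbar_lt a t /\ Rbar_lt t b.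

(* alpha-stationary: the Euler-Lagrange equations of E_alpha hold on (a,b):
   d/dt (dL/du') = dL/du  and  d/dt (dL/dv') = dL/dv. *)
Definition stationary (alpha : R) (a b : Rbar) (u v : R -> R) : Prop :=
  forall t, in_open_int a b t ->
    is_derive
      (fun s => Derive (fun p => Lag alpha (u s) (v s) p (Derive v s)) (Derive u s))
      t
      (Derive (fun x => Lag alpha x (v t) (Derive u t) (Derive v t)) (u t))
    /\
    is_derive
      (fun s => Derive (fun q => Lag alpha (u s) (v s) (Derive u s) q) (Derive v s))
      t
      (Derive (fun y => Lag alpha (u t) y (Derive u t) (Derive v t)) (v t)).

From Pilot Require Import Defs.
From Stdlib Require Import Reals Lra.
From Coquelicot Require Import Coquelicot.
Open Scope R_scope.

(* The Euler-Lagrange equations of a length-type functional are invariant under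
   reparametrization, so their residual (E_u, E_v) is always orthogonal to the velocity:
   u' E_u + v' E_v = 0.  Since the quadratic form p^2 + sinh(u)^2 q^2 is positive definite,
   (E_u, E_v) therefore vanishes iff the single combination -sinh(u)^2 v' E_u + u' E_v does,
   and a direct computation identifies it with u^alpha sinh(u) |gamma'|^2 times
   alpha <n, xi> / d - kappa.  Nothing in the argument requires alpha <> 0. *)

Lemma cosh_sq_sub_sinh_sq x : cosh x ^ 2 - sinh x ^ 2 = 1.
Proof.
  unfold cosh, sinh; rewrite exp_Ropp.
  assert (exp x <> 0) by apply Rgt_not_eq, exp_pos.
  field; assumption.
Qed.

Lemma sin_sq_add_cos_sq x : sin x ^ 2 + cos x ^ 2 = 1.
Proof. rewrite <- (sin2_cos2 x); unfold Rsqr; ring. Qed.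

Lemma sinh_gt0 x : 0 < x -> 0 < sinh x.
Proof. intro Hx; rewrite <- sinh_0; apply sinh_lt, Hx. Qed.

Lemma locally_in_open_int a b t : in_open_int a b t -> locally t (in_open_int a b).
Proof.
  intros [Hat Htb]; apply filter_and; [exact (open_Rbar_gt' t a Hat) | exact (open_Rbar_lt' t b Htb)].
Qed.

(* Quantities along a curve are expressed through its jet:
   x = u, y = v, p = u', p' = u'', q = v', q' = v''. *)
Definition speed_sq (x p q : R) : R := p ^ 2 + sinh x ^ 2 * q ^ 2.

Definition momentum_u (al x p q : R) : R := Rpower x al * p / sqrt (speed_sq x p q).

Definition momentum_v (al x p q : R) : R :=
  Rpower x al * (sinh x ^ 2 * q) / sqrt (speed_sq x p q).

Definition lagrangian_du (al x p q : R) : R :=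
  Rpower x al * (al / x * sqrt (speed_sq x p q)
                 + sinh x * cosh x * q ^ 2 / sqrt (speed_sq x p q)).

(* [auto_derive] expands [p ^ 2] into [p * (p * 1)]; refolding makes the [sqrt] terms
   syntactically equal again, so that [field] treats them as one atom. *)
Ltac fold_speed_sq :=
  repeat match goal with
  | |- context [?p * (?p * 1) + sinh ?x * (sinh ?x * 1) * (?q * (?q * 1))] =>
      replace (p * (p * 1) + sinh x * (sinh x * 1) * (q * (q * 1)))
        with (speed_sq x p q) by (unfold speed_sq; ring)
  end.

Ltac eta_Derive :=
  repeat match goal with
  | |- context [Derive (fun x => ?f x) ?t] => change (Derive (fun x => f x) t) with (Derive f t)
  end.

Lemma Derive_Lag_p al x y p q :
  0 < speed_sq x p q -> Derive (fun p => Lag al x y p q) p = momentum_u al x p q.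
Proof.
  intro HS; apply is_derive_unique; unfold Lag, momentum_u.
  auto_derive; fold_speed_sq; [assumption |].
  assert (0 < sqrt (speed_sq x p q)) by now apply sqrt_lt_R0.
  field; lra.
Qed.

Lemma Derive_Lag_q al x y p q :
  0 < speed_sq x p q -> Derive (fun q => Lag al x y p q) q = momentum_v al x p q.
Proof.
  intro HS; apply is_derive_unique; unfold Lag, momentum_v.
  auto_derive; fold_speed_sq; [assumption |].
  assert (0 < sqrt (speed_sq x p q)) by now apply sqrt_lt_R0.
  field; lra.
Qed.

Lemma Derive_Lag_x al x y p q :
  0 < x -> 0 < speed_sq x p q -> Derive (fun x => Lag al x y p q) x = lagrangian_du al x p q.
Proof.
  intros Hx HS; apply is_derive_unique; unfold Lag, lagrangian_du, Rpower.
  auto_derive; fold_speed_sq; [tauto |].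
  assert (0 < sqrt (speed_sq x p q)) by now apply sqrt_lt_R0.
  field; lra.
Qed.

Lemma Derive_Lag_y al x y p q : Derive (fun y => Lag al x y p q) y = 0.
Proof. apply is_derive_unique; unfold Lag; auto_derive; trivial. Qed.

Definition speed_rate (x p p' q q' : R) : R :=
  (p * p' + sinh x * cosh x * p * q ^ 2 + sinh x ^ 2 * q * q') / sqrt (speed_sq x p q).

Definition momentum_u_rate (al x p p' q q' : R) : R :=
  Rpower x al / sqrt (speed_sq x p q)
  * (al * p ^ 2 / x + p' - p * speed_rate x p p' q q' / sqrt (speed_sq x p q)).

Definition momentum_v_rate (al x p p' q q' : R) : R :=
  Rpower x al / sqrt (speed_sq x p q)
  * (al * p / x * sinh x ^ 2 * q + 2 * sinh x * cosh x * p * q + sinh x ^ 2 * q'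
     - sinh x ^ 2 * q * speed_rate x p p' q q' / sqrt (speed_sq x p q)).

Section MomentumAlongCurve.

Variables (al : R) (u v : R -> R) (t : R).
Hypotheses (du : ex_derive u t) (ddu : ex_derive (Derive u) t) (ddv : ex_derive (Derive v) t).
Hypotheses (u_gt0 : 0 < u t) (speed_sq_gt0 : 0 < speed_sq (u t) (Derive u t) (Derive v t)).

Lemma is_derive_momentum_u :
  is_derive (fun s => momentum_u al (u s) (Derive u s) (Derive v s)) t
    (momentum_u_rate al (u t) (Derive u t) (Derive (Derive u) t) (Derive v t) (Derive (Derive v) t)).
Proof.
  unfold momentum_u_rate, speed_rate, momentum_u, Rpower; unfold speed_sq at 1.
  assert (HS : 0 < sqrt (speed_sq (u t) (Derive u t) (Derive v t))) by now apply sqrt_lt_R0.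
  auto_derive; fold_speed_sq; eta_Derive; [now repeat split; try apply Rgt_not_eq |].
  field; lra.
Qed.

Lemma is_derive_momentum_v :
  is_derive (fun s => momentum_v al (u s) (Derive u s) (Derive v s)) t
    (momentum_v_rate al (u t) (Derive u t) (Derive (Derive u) t) (Derive v t) (Derive (Derive v) t)).
Proof.
  unfold momentum_v_rate, speed_rate, momentum_v, Rpower; unfold speed_sq at 1.
  assert (HS : 0 < sqrt (speed_sq (u t) (Derive u t) (Derive v t))) by now apply sqrt_lt_R0.
  auto_derive; fold_speed_sq; eta_Derive; [now repeat split; try apply Rgt_not_eq |].
  field; lra.
Qed.

End MomentumAlongCurve.

Definition velocity (x y p q : R) : R3 :=
  (cosh x * p * cos y - sinh x * sin y * q,
   cosh x * p * sin y + sinh x * cos y * q,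
   sinh x * p).

Definition acceleration (x y p p' q q' : R) : R3 :=
  let P := sinh x * p ^ 2 + cosh x * p' - sinh x * q ^ 2 in
  let Q := 2 * cosh x * p * q + sinh x * q' in
  (cos y * P - sin y * Q, sin y * P + cos y * Q, cosh x * p ^ 2 + sinh x * p').

Lemma vderive_ext_loc (f g : R -> R3) t :
  locally t (fun s => f s = g s) -> vderive f t = vderive g t.
Proof.
  intro Hfg.
  assert (Hc : forall c : R3 -> R, Derive (fun s => c (f s)) t = Derive (fun s => c (g s)) t).
  { intro c; apply Derive_ext_loc; revert Hfg; apply filter_imp; intros s ->; reflexivity. }
  unfold vderive; now rewrite !Hc.
Qed.

Lemma vderive_gamma (u v : R -> R) s :
  ex_derive u s -> ex_derive v s ->
  vderive (gamma u v) s = velocity (u s) (v s) (Derive u s) (Derive v s).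
Proof.
  intros du dv; unfold vderive, velocity, gamma, Psi, Defs.c1, c2, c3; simpl.
  f_equal; [f_equal |]; apply is_derive_unique; auto_derive; eta_Derive;
    solve [now repeat split | ring].
Qed.

Lemma vderive_velocity (u v : R -> R) t :
  ex_derive u t -> ex_derive v t -> ex_derive (Derive u) t -> ex_derive (Derive v) t ->
  vderive (fun s => velocity (u s) (v s) (Derive u s) (Derive v s)) t =
  acceleration (u t) (v t) (Derive u t) (Derive (Derive u) t) (Derive v t) (Derive (Derive v) t).
Proof.
  intros du dv ddu ddv; unfold vderive, velocity, acceleration, Defs.c1, c2, c3; simpl.
  f_equal; [f_equal |]; apply is_derive_unique; auto_derive; eta_Derive;
    solve [now repeat split | ring].
Qed.

Lemma vderive2_gamma (u v : R -> R) t :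
  locally t (fun s => ex_derive u s /\ ex_derive v s) ->
  ex_derive (Derive u) t -> ex_derive (Derive v) t ->
  vderive (vderive (gamma u v)) t =
  acceleration (u t) (v t) (Derive u t) (Derive (Derive u) t) (Derive v t) (Derive (Derive v) t).
Proof.
  intros Hd ddu ddv; destruct (locally_singleton _ _ Hd) as [du dv].
  rewrite <- vderive_velocity by assumption.
  apply vderive_ext_loc; revert Hd; apply filter_imp; intros s [dus dvs].
  now apply vderive_gamma.
Qed.

Definition curvature_numerator (x p p' q q' : R) : R :=
  sinh x * (p' * q - p * q') - cosh x * q * (2 * p ^ 2 + sinh x ^ 2 * q ^ 2).

Lemma linner_acceleration_normal (u v : R -> R) t p' q' :
  linner (acceleration (u t) (v t) (Derive u t) p' (Derive v t) q') (normal u v t) =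
  curvature_numerator (u t) (Derive u t) p' (Derive v t) q' / speed u v t.
Proof.
  unfold linner, acceleration, normal, curvature_numerator, Defs.c1, c2, c3; cbn [fst snd].
  set (x := u t); set (y := v t); set (p := Derive u t); set (q := Derive v t).
  apply Rminus_diag_uniq.
  transitivity (/ speed u v t *
    ((sinh x * cosh x * q * (sinh x * p ^ 2 + cosh x * p' - sinh x * q ^ 2)
      - p * (2 * cosh x * p * q + sinh x * q')) * (sin y ^ 2 + cos y ^ 2 - 1)
     + sinh x * q * p' * (cosh x ^ 2 - sinh x ^ 2 - 1))).
  - unfold Rdiv; ring.
  - rewrite sin_sq_add_cos_sq, cosh_sq_sub_sinh_sq; ring.
Qed.

Lemma linner_normal_xi (u v : R -> R) t :
  linner (normal u v t) (xi (u t) (v t)) = sinh (u t) * Derive v t / speed u v t.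
Proof.
  unfold linner, normal, xi, Defs.c1, c2, c3; cbn [fst snd].
  set (x := u t); set (y := v t); set (p := Derive u t); set (q := Derive v t).
  apply Rminus_diag_uniq.
  transitivity (/ speed u v t * sinh x * q *
    (cosh x ^ 2 * (sin y ^ 2 + cos y ^ 2 - 1) + (cosh x ^ 2 - sinh x ^ 2 - 1))).
  - unfold Rdiv; ring.
  - rewrite sin_sq_add_cos_sq, cosh_sq_sub_sinh_sq; ring.
Qed.

Lemma curvature_eq (u v : R -> R) t :
  locally t (fun s => ex_derive u s /\ ex_derive v s) ->
  ex_derive (Derive u) t -> ex_derive (Derive v) t -> 0 < speed u v t ->
  curvature u v t =
  curvature_numerator (u t) (Derive u t) (Derive (Derive u) t) (Derive v t) (Derive (Derive v) t)
  / speed u v t ^ 3.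
Proof.
  intros Hd ddu ddv HS; unfold curvature.
  rewrite vderive2_gamma, linner_acceleration_normal by assumption.
  field; lra.
Qed.

Lemma pair_eq0_iff_cross_eq0 a b c e1 e2 :
  0 < a ^ 2 + c * b ^ 2 -> a * e1 + b * e2 = 0 ->
  (e1 = 0 /\ e2 = 0 <-> - c * b * e1 + a * e2 = 0).
Proof.
  intros Hdet Hdot; split; [intros [-> ->]; ring | intro Hcross].
  assert (H1 : (a ^ 2 + c * b ^ 2) * e1 = 0).
  { transitivity (a * (a * e1 + b * e2) - b * (- c * b * e1 + a * e2)); [ring |].
    rewrite Hdot, Hcross; ring. }
  assert (H2 : (a ^ 2 + c * b ^ 2) * e2 = 0).
  { transitivity (c * b * (a * e1 + b * e2) + a * (- c * b * e1 + a * e2)); [ring |].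
    rewrite Hdot, Hcross; ring. }
  apply Rmult_integral in H1, H2; lra.
Qed.

Section EulerLagrangeJet.

Variables (al x p p' q q' : R).
Hypotheses (x_gt0 : 0 < x) (speed_sq_gt0 : 0 < speed_sq x p q).

Lemma euler_lagrange_tangential :
  p * (momentum_u_rate al x p p' q q' - lagrangian_du al x p q)
  + q * momentum_v_rate al x p p' q q' = 0.
Proof.
  assert (HS := sqrt_lt_R0 _ speed_sq_gt0).
  assert (HS2 := sqrt_sqrt _ (Rlt_le _ _ speed_sq_gt0)).
  unfold momentum_u_rate, momentum_v_rate, lagrangian_du, speed_rate.
  set (S := sqrt (speed_sq x p q)) in *; unfold speed_sq in HS2 |- *.
  transitivity ((p ^ 2 + sinh x ^ 2 * q ^ 2 - S * S) * Rpower x al / S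
    * (al * p / x - (p * p' + sinh x * cosh x * p * q ^ 2 + sinh x ^ 2 * q * q') / S ^ 2)).
  - field; lra.
  - rewrite HS2; field; lra.
Qed.

Lemma euler_lagrange_normal :
  - sinh x ^ 2 * q * (momentum_u_rate al x p p' q q' - lagrangian_du al x p q)
  + p * momentum_v_rate al x p p' q q' =
  Rpower x al * sinh x * sqrt (speed_sq x p q) ^ 2 *
  (al * (sinh x * q / sqrt (speed_sq x p q)) / x
   - curvature_numerator x p p' q q' / sqrt (speed_sq x p q) ^ 3).
Proof.
  assert (HS := sqrt_lt_R0 _ speed_sq_gt0).
  unfold momentum_u_rate, momentum_v_rate, lagrangian_du, speed_rate, curvature_numerator.
  set (S := sqrt (speed_sq x p q)) in *.
  field; lra.
Qed.

Lemma euler_lagrange_iff_curvature :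
  momentum_u_rate al x p p' q q' = lagrangian_du al x p q /\ momentum_v_rate al x p p' q q' = 0
  <->
  curvature_numerator x p p' q q' / sqrt (speed_sq x p q) ^ 3
  = al * (sinh x * q / sqrt (speed_sq x p q)) / x.
Proof.
  assert (Hweight : 0 < Rpower x al * sinh x * sqrt (speed_sq x p q) ^ 2).
  { assert (0 < sqrt (speed_sq x p q)) by now apply sqrt_lt_R0.
    apply Rmult_lt_0_compat; [apply Rmult_lt_0_compat |].
    - apply exp_pos.
    - now apply sinh_gt0.
    - now apply pow_lt. }
  transitivity (momentum_u_rate al x p p' q q' - lagrangian_du al x p q = 0
                /\ momentum_v_rate al x p p' q q' = 0); [lra |].
  rewrite (pair_eq0_iff_cross_eq0 p q (sinh x ^ 2)) by (apply euler_lagrange_tangential || assumption).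
  rewrite euler_lagrange_normal; split; intro H.
  - apply Rmult_integral in H; lra.
  - rewrite H; ring.
Qed.

End EulerLagrangeJet.

Lemma is_derive_locally_iff (f g : R -> R) t d l :
  locally t (fun s => g s = f s) -> is_derive f t d -> (is_derive g t l <-> d = l).
Proof.
  intros Hgf Hf; split.
  - intro Hg; apply (is_derive_ext_loc _ _ _ _ Hgf) in Hg.
    apply is_derive_unique in Hf, Hg; congruence.
  - intros <-; apply (is_derive_ext_loc f); [| exact Hf].
    revert Hgf; apply filter_imp; now intros s ->.
Qed.

Lemma euler_lagrange_at_iff_curvature alpha (u v : R -> R) t :
  locally t (fun s => ex_derive u s /\ ex_derive v s
                      /\ 0 < speed_sq (u s) (Derive u s) (Derive v s)) ->
  ex_derive (Derive u) t -> ex_derive (Derive v) t -> 0 < u t ->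
  (is_derive (fun s => Derive (fun p => Lag alpha (u s) (v s) p (Derive v s)) (Derive u s)) t
     (Derive (fun x => Lag alpha x (v t) (Derive u t) (Derive v t)) (u t))
   /\ is_derive (fun s => Derive (fun q => Lag alpha (u s) (v s) (Derive u s) q) (Derive v s)) t
     (Derive (fun y => Lag alpha (u t) y (Derive u t) (Derive v t)) (v t)))
  <-> curvature u v t = alpha * linner (normal u v t) (xi (u t) (v t)) / distN (u t) (v t).
Proof.
  intros Hloc ddu ddv Hu.
  destruct (locally_singleton _ _ Hloc) as (du & dv & HS).
  rewrite Derive_Lag_x, Derive_Lag_y by assumption.
  assert (Hmu : locally t (fun s =>
    Derive (fun p => Lag alpha (u s) (v s) p (Derive v s)) (Derive u s)
    = momentum_u alpha (u s) (Derive u s) (Derive v s))).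
  { revert Hloc; apply filter_imp; intros s (_ & _ & HSs); now apply Derive_Lag_p. }
  assert (Hmv : locally t (fun s =>
    Derive (fun q => Lag alpha (u s) (v s) (Derive u s) q) (Derive v s)
    = momentum_v alpha (u s) (Derive u s) (Derive v s))).
  { revert Hloc; apply filter_imp; intros s (_ & _ & HSs); now apply Derive_Lag_q. }
  rewrite (is_derive_locally_iff _ _ _ _ _ Hmu (is_derive_momentum_u alpha u v t du ddu ddv Hu HS)),
    (is_derive_locally_iff _ _ _ _ _ Hmv (is_derive_momentum_v alpha u v t du ddu ddv Hu HS)).
  assert (Hspeed : 0 < speed u v t) by now apply sqrt_lt_R0.
  rewrite curvature_eq, linner_normal_xi; [| revert Hloc; apply filter_imp; tauto | assumption ..].
  apply euler_lagrange_iff_curvature; assumption.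
Qed.

Theorem proposition2p2 (alpha : R) (a b : Rbar) (u v : R -> R) :
  alpha <> 0 ->
  Rbar_lt a b ->
  (* u, v twice differentiable on (a,b) *)
  (forall t, in_open_int a b t ->
     ex_derive u t /\ ex_derive v t /\
     ex_derive (Derive u) t /\ ex_derive (Derive v) t) ->
  (* gamma avoids N *)
  (forall t, in_open_int a b t -> 0 < u t) ->
  (* gamma is regular *)
  (forall t, in_open_int a b t -> 0 < speed u v t) ->
  (stationary alpha a b u v <->
   forall t, in_open_int a b t ->
     curvature u v t =
       alpha * linner (normal u v t) (xi (u t) (v t)) / distN (u t) (v t)).
Proof.
  intros _ _ Hdiff Hu Hspeed.
  assert (Hloc : forall t, in_open_int a b t ->
    locally t (fun s => ex_derive u s /\ ex_derive v s
                        /\ 0 < speed_sq (u s) (Derive u s) (Derive v s))).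
  { intros t Ht; generalize (locally_in_open_int a b t Ht); apply filter_imp.
    intros s Hs; destruct (Hdiff s Hs) as (du & dv & _); repeat split; try assumption.
    apply sqrt_lt_0_alt; rewrite sqrt_0; exact (Hspeed s Hs). }
  unfold stationary; split; intros H t Ht; destruct (Hdiff t Ht) as (_ & _ & ddu & ddv);
    apply (euler_lagrange_at_iff_curvature alpha u v t (Hloc t Ht) ddu ddv (Hu t Ht)); auto.
Qed.
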